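(* Let $G=(V,E)$ be an undirected graph with known non-negative edge weights such that all shortest paths are unique, $m=|E|$, and suppose the ordering of the (unknown, distinct) edge capacities is a uniformly random permutation of $\{1,\dots,m\}$. For $X\subseteq V$ let $f(X)$ be the expected number of edges revealed by the vantage point set $X$. Then $f$ is monotone and submodular: for all $X\subseteq V$ and $w\in V$, $f(X\cup\{w\})\ge f(X)$; and for all $X\subseteq Y\subseteq V$ and $w\in V$, $f(X\cup\{w\})-f(X)\ge f(Y\cup\{w\})-f(Y)$.
   Context: For vertices $s,t$, $P(s,t)$ denotes the unique shortest path from $s$ to $t$ with respect to the edge weights. An edge $e$ on $P(s,t)$ is a bottleneck edge of $P(s,t)$ if its capacity is strictly smaller than the capacity of every other edge of $P(s,t)$. Selecting a vertex $s$ as a vantage point reveals the bottleneck edge of $P(s,t)$ for every $t\in V\setminus\{s\}$; a set $X$ of vantage points reveals the union of the edges revealed by its members. *)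

From HB Require Import structures.
From mathcomp Require Import all_boot all_order all_algebra.
From mathcomp Require Import boolp.
Set Implicit Arguments. Unset Strict Implicit. Unset Printing Implicit Defensive.
Import Order.TTheory GRing.Theory Num.Theory.
Local Open Scope ring_scope.

(* An undirected simple graph on the finite vertex type V is given by a
   symmetric irreflexive relation adj; an edge is the 2-element set {x,y}. *)
Definition edge_set (V : finType) (adj : rel V) : {set {set V}} :=
  [set e : {set V} | [exists x : V, exists y : V, adj x y && (e == [set x; y])]].

Definition Edge (V : finType) (adj : rel V) := {e : {set V} | e \in edge_set adj}.
HB.instance Definition _ (V : finType) (adj : rel V) :=
  Finite.copy (Edge adj) {e : {set V} | e \in edge_set adj}.

Definition edges_of (V : finType) (s : V) (p : seq V) : seq {set V} :=
  [seq [set xy.1; xy.2] | xy <- zip (s :: p) p].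

Definition is_path (V : finType) (adj : rel V) (s t : V) (p : seq V) : bool :=
  [&& path adj s p, last s p == t & uniq (s :: p)].

Definition pweight (R : realFieldType) (V : finType) (wt : {set V} -> R)
  (s : V) (p : seq V) : R := \sum_(e <- edges_of s p) wt e.

Definition is_shortest (R : realFieldType) (V : finType) (adj : rel V)
  (wt : {set V} -> R) (s t : V) (p : seq V) : Prop :=
  is_path adj s t p /\
  forall q, is_path adj s t q -> pweight wt s p <= pweight wt s q.

Definition unique_shortest_paths (R : realFieldType) (V : finType) (adj : rel V)
  (wt : {set V} -> R) : Prop :=
  forall s t p q, is_shortest adj wt s t p -> is_shortest adj wt s t q -> p = q.

(* capacity of a vertex set e under the capacity assignment c (0 if not an edge;
   never used for non-edges) *)
Definition cap_of (V : finType) (adj : rel V) (n : nat)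
  (c : {ffun Edge adj -> 'I_n}) (e : {set V}) : nat :=
  match @insub _ (fun e => e \in edge_set adj) (Edge adj) e with
  | Some e' => nat_of_ord (c e')
  | None => 0%N
  end.

Definition bottleneck (V : finType) (cap : {set V} -> nat) (s : V) (p : seq V)
  (e : {set V}) : Prop :=
  e \in edges_of s p /\
  forall e', e' \in edges_of s p -> e' != e -> (cap e < cap e')%N.

Definition reveals (R : realFieldType) (V : finType) (adj : rel V)
  (wt : {set V} -> R) (n : nat) (c : {ffun Edge adj -> 'I_n}) (s : V)
  (e : Edge adj) : Prop :=
  exists t, t != s /\
    exists p, is_shortest adj wt s t p /\ bottleneck (cap_of c) s p (val e).

Definition revealed (R : realFieldType) (V : finType) (adj : rel V)
  (wt : {set V} -> R) (n : nat) (c : {ffun Edge adj -> 'I_n}) (X : {set V})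
  : {set Edge adj} :=
  [set e : Edge adj | `[< exists2 s, s \in X & reveals wt c s e >]].

(* f(X): expected number of edges revealed by X when the capacity ordering is a
   uniformly random bijection Edge -> {0,...,m-1} (i.e. a uniformly random
   permutation of the ranks), m = #|Edge|. *)
Definition f_reveal (R : realFieldType) (V : finType) (adj : rel V)
  (wt : {set V} -> R) (X : {set V}) : R :=
  (\sum_(c : {ffun Edge adj -> 'I_#|{: Edge adj}|} | injectiveb c)
      (#|revealed wt c X|)%:R)
  / (#|[pred c : {ffun Edge adj -> 'I_#|{: Edge adj}|} | injectiveb c]|)%:R.
Arguments f_reveal {R V} adj wt X.

(* For a fixed capacity ordering c, X |-> revealed c X is the union over the
   vantage points s in X of the edges revealed by s, so |revealed c X| is a
   coverage function and therefore monotone and submodular.  The function f is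
   the average of these coverage functions over all orderings c, and both
   properties are preserved by nonnegative averaging. *)

From HB Require Import structures.
From mathcomp Require Import all_boot all_order all_algebra.
From mathcomp Require Import boolp.
From mathcomp Require Import lra zify.
Import Order.TTheory GRing.Theory Num.Theory.
Local Open Scope ring_scope.

Lemma cardsU_submodular (T : finType) (W X Y : {set T}) : X \subset Y ->
  (#|W :|: Y| + #|X| <= #|W :|: X| + #|Y|)%N.
Proof.
move=> sXY; have := cardsUI W Y; have := cardsUI W X.
have : (#|W :&: X| <= #|W :&: Y|)%N by apply/subset_leq_card/setIS.
lia.
Qed.

Section Revealed.

Variables (R : realFieldType) (V : finType) (adj : rel V) (wt : {set V} -> R).
Variables (n : nat) (c : {ffun Edge adj -> 'I_n}).

Lemma revealedU1 (w : V) (X : {set V}) :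
  revealed wt c (w |: X) = revealed wt c [set w] :|: revealed wt c X.
Proof.
apply/setP=> e; rewrite !inE; apply/asboolP/orP.
- case=> s; rewrite !inE => /orP[/eqP->|sX] rev_e.
  + by left; apply/asboolP; exists w; rewrite ?inE.
  + by right; apply/asboolP; exists s.
- case=> /asboolP[s sX rev_e]; exists s => //; rewrite !inE.
  + by move: sX; rewrite inE => ->.
  + by rewrite sX orbT.
Qed.

Lemma revealedS (X Y : {set V}) :
  X \subset Y -> revealed wt c X \subset revealed wt c Y.
Proof.
move=> sXY; apply/subsetP=> e; rewrite !inE => /asboolP[s sX rev_e].
by apply/asboolP; exists s => //; apply: (subsetP sXY).
Qed.

Lemma card_revealedU1 (w : V) (X : {set V}) :
  (#|revealed wt c X| <= #|revealed wt c (w |: X)|)%N.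
Proof. by rewrite revealedU1; apply/subset_leq_card/subsetUr. Qed.

Lemma card_revealedU1_submodular (w : V) (X Y : {set V}) : X \subset Y ->
  (#|revealed wt c (w |: Y)| + #|revealed wt c X|
     <= #|revealed wt c (w |: X)| + #|revealed wt c Y|)%N.
Proof. by move=> sXY; rewrite !revealedU1; apply/cardsU_submodular/revealedS. Qed.

End Revealed.

Theorem mainTheorem2 (R : realFieldType) (V : finType) (adj : rel V)
  (wt : {set V} -> R)
  (adj_sym : symmetric adj) (adj_irr : irreflexive adj)
  (wt_ge0 : forall e, e \in edge_set adj -> 0 <= wt e)
  (uniq_sp : unique_shortest_paths adj wt) :
  (forall (X : {set V}) (w : V), f_reveal adj wt X <= f_reveal adj wt (w |: X)) /\
  (forall (X Y : {set V}) (w : V), X \subset Y ->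
     f_reveal adj wt (w |: Y) - f_reveal adj wt Y <= f_reveal adj wt (w |: X) - f_reveal adj wt X).
Proof.
rewrite /f_reveal; set N := (#|_|)%:R.
have invN_ge0 : 0 <= N^-1 by rewrite invr_ge0 ler0n.
split=> [X w | X Y w sXY].
  apply: ler_wpM2r => //; apply: ler_sum => c _.
  by rewrite ler_nat card_revealedU1.
rewrite -!mulrBl; apply: ler_wpM2r => //.
set gwY := \sum_(c | _) _; set gY := \sum_(c | _) _.
set gwX := \sum_(c | _) _; set gX := \sum_(c | _) _.
suff : gwY + gX <= gwX + gY by lra.
rewrite -!big_split /=; apply: ler_sum => c _.
by rewrite -!natrD ler_nat card_revealedU1_submodular.
Qed.
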